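(* Let $w:[0,1]\to[0,1]$ be continuous and strictly increasing with $w(0)=0$ and $w(1)=1$. Suppose that for all $0\le a_1<c_1<b<c_2<a_2\le 1$ satisfying $(a_2-b)(b-c_1)=(b-a_1)(c_2-b)$ we have $$[w(a_2)-w(b)]\,[w(b)-w(c_1)]=[w(b)-w(a_1)]\,[w(c_2)-w(b)].$$ Then $w(p)=p$ for all $p\in[0,1]$. *)

From Stdlib Require Import Reals.
Open Scope R_scope.

Definition continuous_on_interval (w : R -> R) (a b : R) : Prop :=
  forall x, a <= x <= b ->
  forall eps, 0 < eps -> exists delta, 0 < delta /\
    forall y, a <= y <= b -> Rabs (y - x) < delta -> Rabs (w y - w x) < eps.

Definition strictly_increasing_on (w : R -> R) (a b : R) : Prop :=
  forall x y, a <= x <= b -> a <= y <= b -> x < y -> w x < w y.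

From Stdlib Require Import Reals Lra Lia Psatz.
Open Scope R_scope.

(* The functional equation is invariant under affine changes of
   variable, so every restriction of w to a subinterval [x, y] of [0,1],
   normalised to map [0,1] onto [0,1], again satisfies it.  For a normalised
   solution W, four instances of the equation at the points
   0 < 1/4 < 1/3 < 1/2 < 2/3 < 3/4 < 1 force W(1/2) = 1/2; by rescaling,
   w((x+y)/2) = (w x + w y)/2 for all 0 <= x < y <= 1.  Induction on n then
   shows that w fixes every dyadic rational j/2^n of [0,1].  Finally every
   p in [0,1) lies between two consecutive dyadics j/2^n and (j+1)/2^n, so
   monotonicity gives |w p - p| <= 1/2^n for every n, whence w p = p. *)

Definition ratio_equation (w : R -> R) : Prop :=
  forall a1 c1 b c2 a2 : R,
    0 <= a1 -> a1 < c1 -> c1 < b -> b < c2 -> c2 < a2 -> a2 <= 1 ->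
    (a2 - b) * (b - c1) = (b - a1) * (c2 - b) ->
    (w a2 - w b) * (w b - w c1) = (w b - w a1) * (w c2 - w b).

(* A normalised increasing solution fixes 1/2.  Writing s, a, t, p, r for the
   values at 1/3, 1/2, 2/3, 1/4, 3/4, the equation gives four polynomial
   relations; eliminating p, r and t leaves (2a - 1)(a - s) = 0, and
   a <> s by strict monotonicity. *)
Lemma normalised_midpoint (W : R -> R) :
  strictly_increasing_on W 0 1 -> W 0 = 0 -> W 1 = 1 -> ratio_equation W ->
  W (1/2) = 1/2.
Proof.
  intros hinc h0 h1 hf.
  assert (E1 := hf 0 (1/4) (1/3) (1/2) 1 ltac:(lra) ltac:(lra) ltac:(lra)
     ltac:(lra) ltac:(lra) ltac:(lra) ltac:(field)).
  assert (E2 := hf 0 (1/3) (1/2) (2/3) 1 ltac:(lra) ltac:(lra) ltac:(lra)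
     ltac:(lra) ltac:(lra) ltac:(lra) ltac:(field)).
  assert (E3 := hf 0 (1/2) (2/3) (3/4) 1 ltac:(lra) ltac:(lra) ltac:(lra)
     ltac:(lra) ltac:(lra) ltac:(lra) ltac:(field)).
  assert (E4 := hf 0 (1/4) (1/2) (3/4) 1 ltac:(lra) ltac:(lra) ltac:(lra)
     ltac:(lra) ltac:(lra) ltac:(lra) ltac:(field)).
  assert (M1 := hinc 0 (1/4) ltac:(lra) ltac:(lra) ltac:(lra)).
  assert (M2 := hinc (1/4) (1/3) ltac:(lra) ltac:(lra) ltac:(lra)).
  assert (M3 := hinc (1/3) (1/2) ltac:(lra) ltac:(lra) ltac:(lra)).
  assert (M4 := hinc (1/2) (2/3) ltac:(lra) ltac:(lra) ltac:(lra)).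
  assert (M5 := hinc (2/3) (3/4) ltac:(lra) ltac:(lra) ltac:(lra)).
  assert (M6 := hinc (3/4) 1 ltac:(lra) ltac:(lra) ltac:(lra)).
  rewrite h0, h1 in *.
  set (p := W (1/4)) in *. set (s := W (1/3)) in *. set (a := W (1/2)) in *.
  set (t := W (2/3)) in *. set (r := W (3/4)) in *.
  assert (F1 : (1-a)*s = (1-s)*p) by nra.
  assert (F2 : a*(1-t) = (1-a)*s) by nra.
  assert (F3 : t*(1-r) = a*(1-t)) by nra.
  assert (F4 : a*(1-r) = (1-a)*p) by nra.
  (* eliminate r between F3 and F4 *)
  assert (G1 : a*a*(1-t) = (1-a)*p*t).
  { assert (X1 : a*(t*(1-r)) = a*(a*(1-t))) by (rewrite F3; ring).
    assert (X2 : t*(a*(1-r)) = t*((1-a)*p)) by (rewrite F4; ring).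
    nra. }
  (* eliminate p using F1 *)
  assert (G2 : a*a*(1-t)*(1-s) = (1-a)*((1-a)*s)*t).
  { rewrite F1. replace (a*a*(1-t)*(1-s)) with ((1-s)*(a*a*(1-t))) by ring.
    rewrite G1. ring. }
  (* eliminate t using F2, and cancel the nonzero factor (1-a)s *)
  assert (G3 : ((1-a)*s)*(a*(1-s)) = ((1-a)*s)*((1-a)*t)).
  { rewrite <- F2. nra. }
  apply Rmult_eq_reg_l in G3; [| nra].
  assert (K : (2*a-1)*(a-s) = 0) by nra.
  apply Rmult_integral in K. destruct K; lra.
Qed.

Section Rescaling.

Variable w : R -> R.
Hypothesis hinc : strictly_increasing_on w 0 1.
Hypothesis hf : ratio_equation w.
Variables x y : R.
Hypotheses (hx : 0 <= x) (hxy : x < y) (hy : y <= 1).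

Let rescaled (t : R) : R := (w (x + (y - x) * t) - w x) / (w y - w x).

Let gap_pos : 0 < w y - w x.
Proof. assert (w x < w y) by (apply hinc; lra). lra. Qed.

Let rescaled_increasing : strictly_increasing_on rescaled 0 1.
Proof.
  intros s t Hs Ht Hst. unfold rescaled, Rdiv.
  apply Rmult_lt_compat_r; [apply Rinv_0_lt_compat; exact gap_pos|].
  assert (w (x + (y - x) * s) < w (x + (y - x) * t)); [apply hinc; nra|lra].
Qed.

(* Both sides of the equation scale by (w y - w x)^2 under renormalisation,
   and the hypothesis on the points scales by (y - x)^2. *)
Let rescaled_equation : ratio_equation rescaled.
Proof.
  intros a1 c1 b c2 a2 ha1 h12 h23 h34 h45 ha2 hc.
  set (f t := w (x + (y - x) * t)).
  assert (Hf : (f a2 - f b) * (f b - f c1) = (f b - f a1) * (f c2 - f b)).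
  { apply hf; try nra.
    transitivity ((y - x) ^ 2 * ((a2 - b) * (b - c1))); [ring|].
    rewrite hc; ring. }
  unfold rescaled; fold (f a1) (f c1) (f b) (f c2) (f a2).
  assert (D := gap_pos).
  apply (Rmult_eq_reg_r ((w y - w x) * (w y - w x))); [|nra].
  field_simplify; [|lra|lra]. rewrite Rmult_comm in Hf. nra.
Qed.

Lemma midpoint_equation : w ((x + y) / 2) = (w x + w y) / 2.
Proof.
  assert (D := gap_pos).
  assert (half : rescaled (1 / 2) = 1 / 2).
  { apply normalised_midpoint;
      [exact rescaled_increasing| | |exact rescaled_equation]; unfold rescaled.
    - rewrite Rmult_0_r, Rplus_0_r, Rminus_diag. apply Rdiv_0_l.
    - replace (x + (y - x) * 1) with y by ring. field; lra. }
  unfold rescaled in half.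
  replace (x + (y - x) * (1 / 2)) with ((x + y) / 2) in half by field.
  apply (Rmult_eq_compat_r (w y - w x)) in half.
  replace ((w ((x + y) / 2) - w x) / (w y - w x) * (w y - w x))
    with (w ((x + y) / 2) - w x) in half by (field; lra).
  lra.
Qed.

End Rescaling.

Lemma div_le_of_le_mul (a b c : R) : 0 < c -> a <= b * c -> a / c <= b.
Proof.
  intros Hc H. apply (Rmult_le_reg_r c); [exact Hc|].
  unfold Rdiv; rewrite Rmult_assoc, Rinv_l, Rmult_1_r; lra.
Qed.

Lemma lt_div_of_mul_lt (a b c : R) : 0 < c -> b * c < a -> b < a / c.
Proof.
  intros Hc H. apply (Rmult_lt_reg_r c); [exact Hc|].
  unfold Rdiv; rewrite Rmult_assoc, Rinv_l, Rmult_1_r; lra.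
Qed.

Lemma div_nonneg (a c : R) : 0 <= a -> 0 < c -> 0 <= a / c.
Proof.
  intros Ha Hc. unfold Rdiv. apply Rmult_le_pos; [exact Ha|].
  left; apply Rinv_0_lt_compat, Hc.
Qed.

(* An increasing solution fixes every dyadic rational of [0,1]: odd
   numerators are midpoints of neighbours at the previous level. *)
Lemma dyadic_fixed (w : R -> R) :
  strictly_increasing_on w 0 1 -> ratio_equation w -> w 0 = 0 -> w 1 = 1 ->
  forall n j, (j <= 2 ^ n)%nat -> w (INR j / 2 ^ n) = INR j / 2 ^ n.
Proof.
  intros hinc hf h0 h1.
  induction n as [|n IH]; intros j Hj.
  - simpl in Hj |- *. rewrite Rdiv_1_r.
    destruct j as [|[|j]]; simpl; [exact h0|exact h1|lia].
  - assert (P : 0 < 2 ^ n) by (apply pow_lt; lra).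
    assert (Hn : INR (2 ^ n) = 2 ^ n) by (rewrite pow_INR; reflexivity).
    destruct (Nat.Even_or_Odd j) as [[m Hm]|[m Hm]]; subst j.
    + simpl in Hj.
      replace (INR (2 * m) / 2 ^ S n) with (INR m / 2 ^ n)
        by (rewrite mult_INR; simpl; field; lra).
      apply IH. lia.
    + simpl in Hj. assert (Hm1 : (m + 1 <= 2 ^ n)%nat) by lia.
      assert (Hle : INR (m + 1) <= 2 ^ n) by (rewrite <- Hn; apply le_INR, Hm1).
      rewrite plus_INR in Hle. simpl in Hle.
      replace (INR (2 * m + 1) / 2 ^ S n)
        with ((INR m / 2 ^ n + INR (m + 1) / 2 ^ n) / 2)
        by (rewrite !plus_INR, mult_INR; simpl; field; lra).
      rewrite midpoint_equation, !IH; auto; try lia.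
      * apply div_nonneg; [apply pos_INR|exact P].
      * unfold Rdiv. apply Rmult_lt_compat_r; [apply Rinv_0_lt_compat, P|].
        rewrite plus_INR; simpl; lra.
      * apply div_le_of_le_mul; [exact P|]. rewrite plus_INR; simpl; lra.
Qed.

Lemma nat_floor (N : nat) (t : R) :
  0 <= t < INR N -> exists j, (j < N)%nat /\ INR j <= t < INR j + 1.
Proof.
  induction N as [|N IH]; intros Ht; [simpl in Ht; lra|].
  rewrite S_INR in Ht.
  destruct (Rlt_le_dec t (INR N)) as [Hlt|Hge].
  - destruct (IH (conj (proj1 Ht) Hlt)) as [j [Hj Hb]]. exists j. split; [lia|exact Hb].
  - exists N. split; [lia|lra].
Qed.

Lemma dyadic_bracket (n : nat) (p : R) :
  0 <= p < 1 -> exists j, (S j <= 2 ^ n)%nat /\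
    INR j / 2 ^ n <= p < INR (S j) / 2 ^ n.
Proof.
  intros Hp.
  assert (P : 0 < 2 ^ n) by (apply pow_lt; lra).
  destruct (nat_floor (2 ^ n) (p * 2 ^ n)) as [j [Hj [Hlo Hhi]]].
  { rewrite pow_INR; simpl (INR 2). replace (1 + 1) with 2 by ring. nra. }
  exists j. split; [lia|]. rewrite S_INR.
  split; [apply div_le_of_le_mul|apply lt_div_of_mul_lt]; lra.
Qed.

Lemma le_inv_pow2_eq0 (d : R) :
  0 <= d -> (forall n, d <= / 2 ^ n) -> d = 0.
Proof.
  intros Hd Hb. destruct (Req_dec d 0) as [Z|Z]; [exact Z|exfalso].
  destruct (pow_lt_1_zero (/ 2) ltac:(rewrite Rabs_pos_eq; lra) d ltac:(lra))
    as [N HN].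
  specialize (HN N (le_n N)). specialize (Hb N).
  rewrite pow_inv, Rabs_pos_eq in HN.
  - lra.
  - left. apply Rinv_0_lt_compat, pow_lt; lra.
Qed.

Lemma increasing_le (w : R -> R) (a b : R) :
  strictly_increasing_on w 0 1 -> 0 <= a -> a <= b -> b <= 1 -> w a <= w b.
Proof.
  intros hinc Ha Hab Hb. destruct (Req_dec a b) as [E|E].
  - subst; lra.
  - left; apply hinc; lra.
Qed.

(* An increasing w fixing all dyadic rationals of [0,1] moves no point of
   [0,1) by more than 1/2^n: p and w p lie in the same dyadic interval. *)
Lemma dyadic_squeeze (w : R -> R) (n : nat) (p : R) :
  strictly_increasing_on w 0 1 ->
  (forall j, (j <= 2 ^ n)%nat -> w (INR j / 2 ^ n) = INR j / 2 ^ n) ->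
  0 <= p < 1 -> Rabs (w p - p) <= / 2 ^ n.
Proof.
  intros hinc dyadic Hp.
  assert (P : 0 < 2 ^ n) by (apply pow_lt; lra).
  destruct (dyadic_bracket n p Hp) as [j [Hj [Hlo Hhi]]].
  assert (Hup : INR (S j) / 2 ^ n <= 1).
  { apply div_le_of_le_mul; [exact P|]. rewrite Rmult_1_l.
    replace 2 with (INR 2) by (simpl; ring). rewrite <- pow_INR.
    apply le_INR, Hj. }
  assert (Wlo := increasing_le w _ p hinc
    (div_nonneg _ _ (pos_INR j) P) Hlo ltac:(lra)).
  assert (Whi := increasing_le w p (INR (S j) / 2 ^ n) hinc
    ltac:(lra) ltac:(lra) Hup).
  rewrite dyadic in Wlo, Whi by lia.
  rewrite S_INR in Hhi, Whi.
  apply Rabs_le. unfold Rdiv in *. lra.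
Qed.

Theorem lemma2 (w : R -> R)
  (hmaps : forall x, 0 <= x <= 1 -> 0 <= w x <= 1)
  (hcont : continuous_on_interval w 0 1)
  (hinc : strictly_increasing_on w 0 1)
  (h0 : w 0 = 0) (h1 : w 1 = 1)
  (hfun : forall a1 c1 b c2 a2 : R,
      0 <= a1 -> a1 < c1 -> c1 < b -> b < c2 -> c2 < a2 -> a2 <= 1 ->
      (a2 - b) * (b - c1) = (b - a1) * (c2 - b) ->
      (w a2 - w b) * (w b - w c1) = (w b - w a1) * (w c2 - w b)) :
  forall p, 0 <= p <= 1 -> w p = p.
Proof.
  intros p Hp.
  destruct (Req_dec p 1) as [E|Ne]; [subst; exact h1|].
  assert (close : forall n, Rabs (w p - p) <= / 2 ^ n).
  { intro n. apply dyadic_squeeze; [exact hinc| |lra].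
    exact (dyadic_fixed w hinc hfun h0 h1 n). }
  assert (Z := le_inv_pow2_eq0 _ (Rabs_pos _) close).
  destruct (Req_dec (w p - p) 0) as [E|E]; [lra|contradiction (Rabs_no_R0 _ E Z)].
Qed.
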